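(* For every $T$, every sequence of outcomes $\mathbf x\in\{0,1\}^T$, every sequence of forecasts $\mathbf p\in[0,1]^T$, and every agent with a finite action set $\mathcal A$ and utility $u:\mathcal A\times\{0,1\}\to[-1,1]$, we have $\mathrm{AgentReg}_u(\mathbf p,\mathbf x)\le 4\,\mathrm{Cal}(\mathbf p,\mathbf x)$. In particular, if $\mathrm{Cal}(\mathbf p,\mathbf x)=o(T)$ then $\mathrm{AgentReg}_u(\mathbf p,\mathbf x)=o(T)$ for every such agent.
   Context: For $\mathbf x=(x_1,\dots,x_T)\in\{0,1\}^T$ and $\mathbf p=(p_1,\dots,p_T)\in[0,1]^T$, let $\beta=\frac1T\sum_t x_t$. For $p\in[0,1]$ let $n_p=|\{t:p_t=p\}|$ and $m_p=|\{t:p_t=p,\ x_t=1\}|$; the calibration error is $\mathrm{Cal}(\mathbf p,\mathbf x)=\sum_{p} |p\,n_p-m_p|$, the sum over the finitely many $p$ with $n_p>0$. An agent responds to forecast $p$ with an action $a(p)\in\arg\max_{a\in\mathcal A}\mathbb E_{x\sim\mathrm{Ber}(p)}[u(a,x)]$ (fixed tie-breaking), and $\mathrm{AgentReg}_u(\mathbf p,\mathbf x)=\sum_{t=1}^T u(a(\beta),x_t)-\sum_{t=1}^T u(a(p_t),x_t)$. *)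

From mathcomp Require Import all_boot all_order all_algebra.
Set Implicit Arguments. Unset Strict Implicit. Unset Printing Implicit Defensive.
Import Order.TTheory GRing.Theory Num.Theory.
Local Open Scope ring_scope.

Section Defs.
Variables (R : realFieldType) (T : nat).

(* beta = (1/T) sum_t x_t  (equals 0 when T = 0) *)
Definition avg_outcome (x : 'I_T -> bool) : R :=
  (\sum_(t < T) (x t)%:R) / T%:R.

Definition n_cnt (p : 'I_T -> R) (q : R) : R :=
  #|[set t : 'I_T | p t == q]|%:R.
Definition m_cnt (p : 'I_T -> R) (x : 'I_T -> bool) (q : R) : R :=
  #|[set t : 'I_T | (p t == q) && x t]|%:R.

Definition Cal (p : 'I_T -> R) (x : 'I_T -> bool) : R :=
  \sum_(q <- undup [seq p t | t <- enum 'I_T]) `| q * n_cnt p q - m_cnt p x q |.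

Definition exp_util (A : Type) (u : A -> bool -> R) (a : A) (q : R) : R :=
  (1 - q) * u a false + q * u a true.

Definition is_best_response (A : finType) (u : A -> bool -> R) (br : R -> A) :=
  forall q : R, 0 <= q <= 1 -> forall a : A, exp_util u a q <= exp_util u (br q) q.

Definition AgentReg (A : Type) (u : A -> bool -> R) (br : R -> A)
    (p : 'I_T -> R) (x : 'I_T -> bool) : R :=
  \sum_(t < T) u (br (avg_outcome x)) (x t) - \sum_(t < T) u (br (p t)) (x t).
End Defs.

From mathcomp Require Import all_boot all_order all_algebra.
From mathcomp Require Import ring lra.
Import Order.TTheory GRing.Theory Num.Theory.
Local Open Scope ring_scope.

(* Group the rounds by forecast value q.  On the n_q rounds with forecast q,
   m_q of which have outcome 1, replacing the agent's action br q by any fixed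
   action a changes the utility by n_q d0 + m_q (d1 - d0), where d_b is the
   utility gain of a over br q on outcome b.  Writing this as
   n_q ((1 - q) d0 + q d1) + (m_q - q n_q)(d1 - d0), the first term is <= 0
   because br q is a best response to Ber(q), and the second is at most
   4 |q n_q - m_q| because utilities lie in [-1, 1].  Summing over q with
   a := br beta gives the bound. *)

Lemma partition_big_undup [R : nmodType] [I : finType] [V : eqType]
    (p : I -> V) (F : I -> R) :
  \sum_i F i = \sum_(v <- undup [seq p i | i <- enum I]) \sum_(i | p i == v) F i.
Proof.
under [RHS]eq_bigr do rewrite big_mkcond.
rewrite exchange_big /=; apply: eq_bigr => i _; rewrite -big_mkcond /=.
have p_in : p i \in undup [seq p i | i <- enum I].
  by rewrite mem_undup map_f ?mem_enum.
rewrite -big_filter (eq_filter (a2 := pred1 (p i))) => [|v]; last exact: eq_sym.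
by rewrite filter_pred1_uniq ?undup_uniq // big_seq1.
Qed.

Lemma sum_comp_bool [R : pzRingType] [I : finType] [P : pred I] (x : I -> bool)
    (f : bool -> R) :
  \sum_(i | P i) f (x i) =
  #|[set i | P i]|%:R * f false + #|[set i | P i && x i]|%:R * (f true - f false).
Proof.
have affine_f (b : bool) : f b = f false + b%:R * (f true - f false).
  by case: b; rewrite ?mul1r ?mul0r ?addr0 // addrC subrK.
rewrite (eq_bigr _ (fun i _ => affine_f (x i))) big_split /=.
rewrite -!sum1dep_card !natr_sum !mulr_suml.
congr (_ + _); first by apply: eq_bigr => i _; rewrite mul1r.
rewrite big_mkcondr /=; apply: eq_bigr => i _.
by case: (x i); rewrite ?mul1r ?mul0r.
Qed.

Lemma deviation_gain_le (R : realFieldType) (q n m d0 d1 c : R) :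
  0 <= n -> (1 - q) * d0 + q * d1 <= 0 -> `|d1 - d0| <= c ->
  n * d0 + m * (d1 - d0) <= c * `|q * n - m|.
Proof.
move=> n_ge0 no_gain d_le_c.
have -> : n * d0 + m * (d1 - d0) =
          n * ((1 - q) * d0 + q * d1) + (m - q * n) * (d1 - d0) by ring.
rewrite -[leRHS]add0r lerD ?mulr_ge0_le0 //.
apply: le_trans (ler_norm _) _.
by rewrite normrM distrC [leRHS]mulrC ler_wpM2l ?normr_ge0.
Qed.

Theorem theorem3p3 (R : realFieldType) (T : nat) (x : 'I_T -> bool) (p : 'I_T -> R)
    (A : finType) (u : A -> bool -> R) (br : R -> A) :
  (forall t, 0 <= p t <= 1) ->
  (forall a b, -1 <= u a b <= 1) ->
  is_best_response u br ->
  AgentReg u br p x <= 4 * Cal p x.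
Proof.
move=> p01 u_bounded br_best.
set a := br (avg_outcome _ x).
rewrite /AgentReg -sumrB (partition_big_undup p) /Cal mulr_sumr.
rewrite big_seq [leRHS]big_seq; apply: ler_sum => q q_forecast.
have q01 : 0 <= q <= 1 by move: q_forecast; rewrite mem_undup => /mapP[t _ ->].
rewrite (eq_bigr (fun t => u a (x t) - u (br q) (x t))) => [|t /eqP-> //].
rewrite (sum_comp_bool x (fun b => u a b - u (br q) b)).
apply: deviation_gain_le; first exact: ler0n.
- by have := br_best q q01 a; rewrite /exp_util; lra.
- have := u_bounded a true; have := u_bounded a false.
  have := u_bounded (br q) true; have := u_bounded (br q) false.
  rewrite ler_norml => /andP[? ?] /andP[? ?] /andP[? ?] /andP[? ?].
  by apply/andP; split; lra.
Qed.
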